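(* Let $\Omega=\{1,\ldots,n\}$, let $\mathbf{p}=(p_1,\ldots,p_n)$ and $\mathbf{q}=(q_1,\ldots,q_n)$ be probability vectors, and let $1\le s\le n$; set $\Omega_1=\{1,\ldots,s\}$ and $\Omega_2=\{s+1,\ldots,n\}$. For weights $w=(w_{i,j})_{i\ne j}$ with $0\le w_{i,j}\le1$ and $w_{i,j}+w_{j,i}=1$, define $p_I^w(k)=p_k^2+\sum_{i\ne k}2p_ip_kw_{k,i}$ and $A(w)=\sum_{k=1}^n\min(q_k,p_I^w(k))$; let $P^\star(\mathrm{acc})=\max_w A(w)$. Call $w$ truncated if $w_{i,j}=1$ whenever $i\in\Omega_1,j\in\Omega_2$, and $w_{i,j}=1$ whenever $i,j\in\Omega_2$ with $i<j$ (the weights $w_{i,j}$ with $i,j\in\Omega_1$ being free). Let $\tilde w$ be a truncated weight family maximizing $\sum_{k=1}^s\min(q_k,p_I^{w}(k))$ over truncated $w$, and let $\tilde P(\mathrm{acc})=A(\tilde w)$. Then $$\tilde P(\mathrm{acc})\ \ge\ P^\star(\mathrm{acc})-\sum_{x\in\Omega_2}\big(q_x-p_x^2\big)^+ .$$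
   Context: Interpretation: with two draft tokens $X_1,X_2$ drawn i.i.d. from $\mathbf{p}$, $w_{i,j}$ is the probability of selecting token $i$ when the unordered input pair is $\{i,j\}$, $p_I^w$ is the distribution of the selected token, and $A(w)$ is the acceptance probability after applying single-draft speculative sampling against $\mathbf{q}$; by the optimal-transport characterization, $\max_w A(w)$ is the optimal acceptance probability. In the paper the tokens are additionally ordered so that $q_1-p_1^2\ge\cdots\ge q_n-p_n^2$. $(a)^+=\max(a,0)$. *)

(* Tokens Omega = {1..n} are represented 0-indexed by 'I_n. *)
From mathcomp Require Import all_boot all_order all_algebra.
Set Implicit Arguments. Unset Strict Implicit. Unset Printing Implicit Defensive.
Import Order.TTheory GRing.Theory Num.Theory.
Local Open Scope ring_scope.

Section Defs.
Variables (R : realFieldType) (n : nat).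

Definition prob_vec (p : 'I_n -> R) : Prop :=
  (forall i, 0 <= p i) /\ \sum_(i < n) p i = 1.

(* weights w_{i,j} for i <> j (diagonal entries are irrelevant) *)
Definition valid_weight (w : 'I_n -> 'I_n -> R) : Prop :=
  forall i j : 'I_n, i != j -> 0 <= w i j <= 1 /\ w i j + w j i = 1.

Definition pI (p : 'I_n -> R) (w : 'I_n -> 'I_n -> R) (k : 'I_n) : R :=
  p k ^+ 2 + \sum_(i < n | i != k) 2 * p i * p k * w k i.

Definition accA (p q : 'I_n -> R) (w : 'I_n -> 'I_n -> R) : R :=
  \sum_(k < n) Num.min (q k) (pI p w k).

Definition accA1 (s : nat) (p q : 'I_n -> R) (w : 'I_n -> 'I_n -> R) : R :=
  \sum_(k < n | (k < s)%N) Num.min (q k) (pI p w k).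

(* Omega_1 = {i | i < s}, Omega_2 = {i | s <= i} (0-indexed) *)
Definition truncated (s : nat) (w : 'I_n -> 'I_n -> R) : Prop :=
  (forall i j : 'I_n, (i < s)%N -> (s <= j)%N -> w i j = 1) /\
  (forall i j : 'I_n, (s <= i)%N -> (s <= j)%N -> (i < j)%N -> w i j = 1).

Definition is_max_acc (p q : 'I_n -> R) (Pstar : R) : Prop :=
  (exists w, valid_weight w /\ accA p q w = Pstar) /\
  (forall w, valid_weight w -> accA p q w <= Pstar).

End Defs.

From mathcomp Require Import all_boot all_order all_algebra.
From mathcomp Require Import lra.
Set Implicit Arguments. Unset Strict Implicit. Unset Printing Implicit Defensive.
Import Order.TTheory GRing.Theory Num.Theory.
Local Open Scope ring_scope.

(* Take an optimal weight family w* and truncate it: keep it on Omega_1 x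
   Omega_1, let Omega_1 beat Omega_2 and let the smaller index win inside
   Omega_2.  Truncation only increases the weights w_{k,i} with k in Omega_1,
   so it does not decrease the Omega_1 part of A, which is in turn dominated
   by that of the optimal truncated w~.  On Omega_2 one loses at most
   q_x - min(q_x, p_I(x)) <= (q_x - p_x^2)^+, because p_I(x) >= p_x^2. *)

Section Acceptance.
Variables (R : realFieldType) (n s : nat) (p q : 'I_n -> R).
Hypothesis p_ge0 : forall i, 0 <= p i.

Lemma accA_split (w : 'I_n -> 'I_n -> R) :
  accA p q w = accA1 s p q w + \sum_(k < n | (s <= k)%N) Num.min (q k) (pI p w k).
Proof.
rewrite /accA /accA1 (bigID (fun k : 'I_n => (k < s)%N)) /=; congr (_ + _).
by apply: eq_bigl => k; rewrite -leqNgt.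
Qed.

Lemma sqr_le_pI (w : 'I_n -> 'I_n -> R) k :
  valid_weight w -> p k ^+ 2 <= pI p w k.
Proof.
move=> wv; rewrite /pI lerDl; apply: sumr_ge0 => i ik.
have [/andP[wki_ge0 _] _] : 0 <= w k i <= 1 /\ w k i + w i k = 1.
  by apply: wv; rewrite eq_sym.
by rewrite !mulr_ge0.
Qed.

Lemma ler_pI (w w' : 'I_n -> 'I_n -> R) k :
  (forall i, i != k -> w k i <= w' k i) -> pI p w k <= pI p w' k.
Proof.
move=> le_w; rewrite /pI lerD2l; apply: ler_sum => i ik.
by rewrite ler_wpM2l ?mulr_ge0 ?le_w.
Qed.

Lemma ler_accA1 (w w' : 'I_n -> 'I_n -> R) :
  (forall k : 'I_n, (k < s)%N -> pI p w k <= pI p w' k) ->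
  accA1 s p q w <= accA1 s p q w'.
Proof. by move=> le_pI; apply: ler_sum => k ks; rewrite le_min2 ?le_pI. Qed.

Lemma accA_tail_le (w : 'I_n -> 'I_n -> R) :
  \sum_(k < n | (s <= k)%N) Num.min (q k) (pI p w k) <= \sum_(k < n | (s <= k)%N) q k.
Proof. by apply: ler_sum => k _; rewrite ge_min lexx. Qed.

Lemma accA_tail_ge (w : 'I_n -> 'I_n -> R) : valid_weight w ->
  \sum_(k < n | (s <= k)%N) q k - \sum_(k < n | (s <= k)%N) Num.max (q k - p k ^+ 2) 0
  <= \sum_(k < n | (s <= k)%N) Num.min (q k) (pI p w k).
Proof.
move=> wv; rewrite -sumrB; apply: ler_sum => k _.
have sqr_le := sqr_le_pI k wv.
have max_ge : q k - p k ^+ 2 <= Num.max (q k - p k ^+ 2) 0 by rewrite le_max lexx.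
have max_ge0 : 0 <= Num.max (q k - p k ^+ 2) 0 by rewrite le_max lexx orbT.
by rewrite le_min; apply/andP; split; lra.
Qed.

End Acceptance.

Section Truncation.
Variables (R : realFieldType) (n s : nat).

Definition trunc_weight (w : 'I_n -> 'I_n -> R) (i j : 'I_n) : R :=
  if (i < s)%N && (j < s)%N then w i j
  else if (i < s)%N then 1 else if (j < s)%N then 0
  else if (i < j)%N then 1 else 0.

Lemma valid_trunc_weight w : valid_weight w -> valid_weight (trunc_weight w).
Proof.
move=> wv i j ij; rewrite /trunc_weight.
have one_zero : 0 <= (1 : R) <= 1 /\ 1 + 0 = 1 :> R by rewrite lexx ler01 addr0.
have zero_one : 0 <= (0 : R) <= 1 /\ 0 + 1 = 1 :> R by rewrite lexx ler01 add0r.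
case: (ltnP i s) => his; case: (ltnP j s) => hjs //=; first exact: wv.
case: (ltngtP i j) => // eq_ij.
by move: ij; rewrite (val_inj eq_ij) eqxx.
Qed.

Lemma truncated_trunc_weight w : truncated s (trunc_weight w).
Proof.
rewrite /trunc_weight; split=> i j.
- by move=> his hjs; rewrite his ltnNge hjs.
- by move=> his hjs ij; rewrite [(i < s)%N]ltnNge [(j < s)%N]ltnNge his hjs ij.
Qed.

Lemma trunc_weight_ge w (k i : 'I_n) : valid_weight w -> (k < s)%N -> i != k ->
  w k i <= trunc_weight w k i.
Proof.
move=> wv ks ik; rewrite /trunc_weight ks /=; case: (ltnP i s) => //= _.
have [/andP[_ wki_le1] _] : 0 <= w k i <= 1 /\ w k i + w i k = 1.
  by apply: wv; rewrite eq_sym.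
exact: wki_le1.
Qed.

End Truncation.

Theorem mainTheorem5 (R : realFieldType) (n s : nat)
  (p q : 'I_n -> R) (Pstar : R) (wt : 'I_n -> 'I_n -> R) :
  prob_vec p -> prob_vec q ->
  (1 <= s)%N -> (s <= n)%N ->
  is_max_acc p q Pstar ->
  valid_weight wt -> truncated s wt ->
  (forall w, valid_weight w -> truncated s w -> accA1 s p q w <= accA1 s p q wt) ->
  accA p q wt >= Pstar - \sum_(x < n | (s <= x)%N) Num.max (q x - p x ^+ 2) 0.
Proof.
move=> [p_ge0 _] _ _ _ [[ws [wsv <-]] _] wtv _ wt_opt.
have head_ws : accA1 s p q ws <= accA1 s p q wt.
  apply: (le_trans _ (wt_opt _ (valid_trunc_weight s wsv) (truncated_trunc_weight s ws))).
  apply: ler_accA1 => k ks; apply: ler_pI => // i ik.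
  exact: trunc_weight_ge.
have tail_ws := accA_tail_le s p q ws.
have tail_wt := accA_tail_ge s q p_ge0 wtv.
rewrite (accA_split s p q ws) (accA_split s p q wt); lra.
Qed.
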